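(* Let $k\geqslant 3$ and $\Delta\geqslant 3$ be integers, let $G$ be a finite, simple, connected graph of maximum degree $\Delta$, and let $s$ be a nonnegative integer with $s\leqslant \frac{k-5}{12}$. If $g_k(G)<f(s,\Delta)+1$, then $G$ has diameter at most $k+2s$.
   Context: For integers $m\geqslant 0$ and $\Delta$, let $f(m,\Delta)=\Delta\sum_{i=0}^{m-1}(\Delta-1)^i$ (so $f(0,\Delta)=0$). For a graph $G$, its $k$-th power $G^k$ is the graph on $V(G)$ in which two distinct vertices are adjacent iff their distance in $G$ is at most $k$. $\chi$ denotes the chromatic number and $\Delta(G)$ the maximum degree of $G$. The $k$-gap of $G$ is $g_k(G)=f(k,\Delta(G))+1-\chi(G^k)$. *)

From mathcomp Require Import all_boot all_order all_algebra.
Set Implicit Arguments. Unset Strict Implicit. Unset Printing Implicit Defensive.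

(* Simple graphs: a symmetric irreflexive relation e on a finType T. *)

Definition fmd (m D : nat) : nat := D * \sum_(i < m) (D - 1) ^ i.

Definition deg (T : finType) (e : rel T) (x : T) : nat := #|[set y | e x y]|.
Definition maxdeg (T : finType) (e : rel T) : nat := \max_(x : T) deg e x.

Fixpoint within (T : finType) (e : rel T) (n : nat) (x y : T) : bool :=
  match n with
  | 0 => x == y
  | n'.+1 => within e n' x y || [exists z, within e n' x z && e z y]
  end.

(* graph distance; for connected graphs it is the least n with a walk of
   length n (always < #|T|); for unreachable pairs it defaults to #|T|. *)
Definition dist (T : finType) (e : rel T) (x y : T) : nat :=
  find (fun n => within e n x y) (iota 0 #|T|).

Definition diameter (T : finType) (e : rel T) : nat :=
  \max_(x : T) \max_(y : T) dist e x y.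

Definition powrel (T : finType) (e : rel T) (k : nat) : rel T :=
  fun x y => (x != y) && within e k x y.

Definition colorable (T : finType) (r : rel T) (c : nat) : bool :=
  [exists f : {ffun T -> 'I_c},
     [forall x, forall y, ((x != y) && r x y) ==> (f x != f y)]].

Lemma colorable_card (T : finType) (r : rel T) : exists c, colorable r c.
Proof.
exists #|T|; apply/existsP; exists [ffun x => enum_rank x].
apply/forallP => x; apply/forallP => y; apply/implyP => /andP [Hxy _].
by rewrite !ffunE; apply: contra Hxy => /eqP /enum_rank_inj ->.
Qed.

Definition chi (T : finType) (r : rel T) : nat := ex_minn (colorable_card r).

Definition kgap (T : finType) (e : rel T) (k : nat) : int :=
  (fmd k (maxdeg e) + 1)%:Z - (chi (powrel e k))%:Z.

(* Suppose two vertices u, v are at distance k + 2s + 1; we colour G^k with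
   f(k,D) - f(s,D) colours, so that g_k(G) > f(s,D).  Write q = D - 1 and
   W n = 1 + q + ... + q^(n-1), so that f(n,D) = D * W n.  A Moore-type count
   in breadth-first trees shows that if s < d(x,z) and d(x,z) + s <= k, at
   most D * W k - D * W s vertices of the k-ball around x lie outside the
   s-ball around z.  The s-balls A, B around u and v are more than k apart,
   so they are precoloured with max(|A|,|B|) colours.  The other vertices are
   coloured greedily by decreasing distance from the vertex w at distance
   4s + 2 from u on a geodesic to v.  A vertex x within s of w has A and B in
   its k-ball, and the count with z = u (resp. z = v) leaves room for the |B|
   (resp. |A|) precoloured vertices; a vertex x farther from w has a vertex z
   towards w whose s-ball avoids A and B and is coloured after x. *)

From mathcomp Require Import all_boot all_order all_algebra zify.
Import Order.TTheory GRing.Theory Num.Theory.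
Set Implicit Arguments. Unset Strict Implicit. Unset Printing Implicit Defensive.

Lemma card_bigcup_leq (I : Type) (T : finType) (r : seq I) (P : pred I)
    (F : I -> {set T}) :
  #|\bigcup_(i <- r | P i) F i| <= \sum_(i <- r | P i) #|F i|.
Proof.
elim/big_rec2: _ => [|i n S _ hS]; first by rewrite cards0.
by rewrite (leq_trans (leq_card_setU _ _)) ?leq_add2l.
Qed.

Lemma card_setD_cover (I T : finType) (S X : {set T}) (a : T) (J : {set I})
    (F : I -> {set T}) :
  (forall y, y \in S -> y != a -> exists2 i, i \in J & y \in F i) ->
  #|S :\: X| <= #|[set a] :\: X| + \sum_(i in J) #|F i :\: X|.
Proof.
move=> cover; apply: leq_trans (leq_add (leqnn _) (card_bigcup_leq _ _ _)).
apply: leq_trans (leq_card_setU _ _); apply: subset_leq_card.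
apply/subsetP => y; rewrite !inE => /andP [yX yS].
have [_|ya] := eqVneq y a; first by rewrite yX.
have [i iJ yFi] := cover y yS ya.
by apply/orP; right; apply/bigcupP; exists i; rewrite // inE yX.
Qed.

Lemma sum_leq_card_mul (I : finType) (J : {set I}) (G : I -> nat) K :
  {in J, forall i, G i <= K} -> \sum_(i in J) G i <= #|J| * K.
Proof. by move=> hG; rewrite -sum_nat_const leq_sum. Qed.

Lemma card_ord_lt c m : #|[set i : 'I_c | i < m]| <= m.
Proof.
rewrite cardE -(size_map val) -[m in _ <= m](size_iota 0); apply: uniq_leq_size.
  by rewrite (map_inj_uniq val_inj) enum_uniq.
by move=> j /mapP [i]; rewrite mem_enum inE => ilt ->; rewrite mem_iota.
Qed.

Lemma card_setD_setU (T : finType) (X Y Z : {set T}) :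
  Z \subset X :\: Y -> #|X :\: Y| = #|X :\: (Y :|: Z)| + #|Z|.
Proof.
move=> ZXY; rewrite -(cardsID Z (X :\: Y)) addnC setDDl.
by rewrite (setIidPr ZXY).
Qed.

Definition geom_sum (q n : nat) : nat := \sum_(i < n) q ^ i.

Lemma geom_sum0 q : geom_sum q 0 = 0.
Proof. exact: big_ord0. Qed.

Lemma geom_sumSl q n : geom_sum q n.+1 = 1 + q * geom_sum q n.
Proof.
rewrite /geom_sum big_ord_recl big_distrr; congr (_ + _).
by apply: eq_bigr => i _; rewrite expnS.
Qed.

Lemma geom_sum_cat q m n :
  m <= n -> geom_sum q n = geom_sum q m + \sum_(m <= i < n) q ^ i.
Proof. by move=> mn; rewrite /geom_sum -!(big_mkord xpredT (expn q)) -big_cat_nat. Qed.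

Lemma leq_geom_sum q m n : m <= n -> geom_sum q m <= geom_sum q n.
Proof. by move/geom_sum_cat->; apply: leq_addr. Qed.

Section Distance.
Variables (T : finType) (e : rel T).

Lemma withinS n x y :
  within e n.+1 x y = within e n x y || [exists z, within e n x z && e z y].
Proof. by []. Qed.

Lemma within_mono m n x y : m <= n -> within e m x y -> within e n x y.
Proof.
move=> /subnKC <-; elim: (n - m) => [|i IH]; first by rewrite addn0.
by move=> h; rewrite addnS withinS IH.
Qed.

Lemma within_trans m n x y z :
  within e m x y -> within e n y z -> within e (m + n) x z.
Proof.
move=> hxy; elim: n z => [|n IH] z; first by move/eqP <-; rewrite addn0.
rewrite addnS !withinS => /orP [/IH -> //|/existsP [w /andP [hyw hwz]]].
by apply/orP; right; apply/existsP; exists w; rewrite IH.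
Qed.

Lemma within_edge x y : e x y -> within e 1 x y.
Proof.
by move=> hxy; rewrite withinS; apply/orP; right; apply/existsP; exists x; rewrite /= eqxx.
Qed.

Lemma within_path x p : path e x p -> within e (size p) x (last x p).
Proof.
elim: p x => [|y p IH] x //= /andP [hxy /IH hp].
exact: within_trans (within_edge hxy) hp.
Qed.

Hypothesis esym : symmetric e.
Hypothesis econn : forall x y, connect e x y.

Lemma within_sym n x y : within e n x y -> within e n y x.
Proof.
elim: n y => [|n IH] y; first by rewrite /= eq_sym.
rewrite !withinS => /orP [/IH -> //|/existsP [z /andP [/IH hzx hzy]]].
by apply: within_trans (within_edge _) hzx; rewrite esym.
Qed.

Lemma exists_within x y : exists2 n, n < #|T| & within e n x y.
Proof.
case/connectP: (econn x y) => p hp ->.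
have [p' hp' uniq_p' _] := shortenP hp.
exists (size p'); last exact: within_path.
by have := max_card (mem (x :: p')); rewrite (card_uniqP uniq_p').
Qed.

Lemma within_dist n x y : within e n x y = (dist e x y <= n).
Proof.
have has_within : has (within e ^~ x ^~ y) (iota 0 #|T|).
  by have [m hm hw] := exists_within x y; apply/hasP; exists m; rewrite ?mem_iota.
have := nth_find 0 has_within; have := has_within.
rewrite has_find size_iota -/(dist e x y) => hlt; rewrite nth_iota // add0n => hd.
apply/idP/idP => [hn|]; last by move/within_mono; apply.
rewrite leqNgt; apply/negP => hlt'.
by have := before_find 0 hlt'; rewrite nth_iota ?add0n ?hn // (ltn_trans hlt').
Qed.

Local Notation d := (dist e).

Lemma dist_eq0 x y : (d x y == 0) = (x == y).
Proof. by rewrite -leqn0 -within_dist. Qed.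

Lemma dist_xx x : d x x = 0.
Proof. by apply/eqP; rewrite dist_eq0. Qed.

Lemma dist_sym x y : d x y = d y x.
Proof.
have le_sym a b : d a b <= d b a.
  by rewrite -within_dist; apply: within_sym; rewrite within_dist.
by apply/eqP; rewrite eqn_leq !le_sym.
Qed.

Lemma dist_triangle x y z : d x z <= d x y + d y z.
Proof. by rewrite -within_dist; apply: within_trans; rewrite within_dist. Qed.

Lemma dist_edge x y : e x y -> d x y <= 1.
Proof. by rewrite -within_dist; apply: within_edge. Qed.

Lemma dist_succ x y n : d x y = n.+1 -> exists2 c, e x c & d c y = n.
Proof.
move=> hxy; have : within e n.+1 y x by rewrite within_dist dist_sym hxy.
rewrite withinS within_dist dist_sym hxy ltnn /= => /existsP [c /andP [hyc hcx]].
exists c; first by rewrite esym.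
move: hyc; rewrite within_dist dist_sym => hcy.
have := dist_triangle x c y; have := dist_edge hcx; rewrite dist_sym; lia.
Qed.

Lemma dist_split x y n : n <= d x y -> exists z, d x z = n /\ d z y = d x y - n.
Proof.
elim: n => [|n IH] hn; first by exists x; rewrite dist_xx subn0.
have [z [hxz hzy]] := IH (ltnW hn).
have [c hzc hcy] : exists2 c, e z c & d c y = d x y - n.+1 by apply: dist_succ; lia.
exists c; split=> //.
have := dist_triangle x z c; have := dist_triangle x c y; have := dist_edge hzc; lia.
Qed.

Lemma powrelE n x y : powrel e n x y = (x != y) && (d x y <= n).
Proof. by rewrite /powrel within_dist. Qed.

Lemma powrel_sym n : symmetric (powrel e n).
Proof. by move=> x y; rewrite !powrelE eq_sym dist_sym. Qed.

End Distance.

Section MooreBounds.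
Variables (T : finType) (e : rel T).
Hypothesis esym : symmetric e.
Hypothesis econn : forall x y, connect e x y.
Variable q : nat.
Hypothesis deg_leq : forall x, #|[set y | e x y]| <= q.+1.

Local Notation d := (dist e).
Local Notation W := (geom_sum q).
Local Notation N x := [set y | e x y].

Definition ball n x : {set T} := [set y | d x y <= n].
(* [branch b a n] plays the role of the subtree hanging from a, truncated at
   depth n, in a breadth-first tree rooted at b. *)
Definition branch b a n : {set T} :=
  [set y | (d a y < n) && (d b y == (d a y).+1)].
Definition branch_level b a j : {set T} :=
  [set y | (d a y == j) && (d b y == j.+1)].

Let dist_sym := dist_sym esym econn.
Let dist_triangle := dist_triangle econn.
Let dist_edge := dist_edge econn.
Let dist_succ := dist_succ esym econn.
Let dist_eq0 := dist_eq0 econn.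
Let dist_xx := dist_xx econn.

Lemma dist_pred_neighbour a y : y != a -> exists2 c, e a c & d a y = (d c y).+1.
Proof.
move=> ya; have [c hac hcy] : exists2 c, e a c & d c y = (d a y).-1.
  by apply: dist_succ; move: ya; rewrite eq_sym -dist_eq0; lia.
by exists c; rewrite // hcy; move: ya; rewrite eq_sym -dist_eq0; lia.
Qed.

Lemma card_neighbours_setI c w (X : {set T}) :
  e c w -> w \notin X -> #|N c :&: X| <= q.
Proof.
move=> hcw wX; rewrite -ltnS; apply: leq_trans (deg_leq c).
apply: proper_card; apply/properP; split; first exact: subsetIl.
by exists w; rewrite !inE ?hcw // (negbTE wX) andbF.
Qed.

Section Branch.
Variables a b : T.
Hypothesis hab : e a b.

Lemma branch_level_parent j y :
  y \in branch_level b a j.+1 -> exists2 c, c \in branch_level b a j & e c y.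
Proof.
rewrite inE => /andP [/eqP hay /eqP hby].
have [c hyc hca] : exists2 c, e y c & d c a = j by apply: dist_succ; rewrite dist_sym.
exists c; last by rewrite esym.
rewrite inE dist_sym hca eqxx /=; apply/eqP.
have := dist_triangle b c y; have := dist_triangle b a c.
have := dist_edge hab; have := dist_edge hyc.
rewrite (dist_sym b a) (dist_sym a c) (dist_sym y c) hca hby; lia.
Qed.

Lemma branch_level_exit j c :
  c \in branch_level b a j -> exists2 w, e c w & w \notin branch_level b a j.+1.
Proof.
rewrite inE => /andP [/eqP hac _]; case: j hac => [|j] hac.
  have /eqP <- : a == c by rewrite -dist_eq0 hac.
  by exists b; rewrite // inE dist_xx andbF.
have [w hcw hwa] : exists2 w, e c w & d w a = j by apply: dist_succ; rewrite dist_sym.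
by exists w; rewrite // inE dist_sym hwa; lia.
Qed.

Lemma card_branch_level j : #|branch_level b a j| <= q ^ j.
Proof.
elim: j => [|j IH].
  rewrite expn0 -(cards1 a); apply: subset_leq_card; apply/subsetP => y.
  by rewrite !inE dist_eq0 eq_sym => /andP [].
have cover : branch_level b a j.+1 \subset
    \bigcup_(c in branch_level b a j) (N c :&: branch_level b a j.+1).
  apply/subsetP => y hy; have [c hc hcy] := branch_level_parent hy.
  by apply/bigcupP; exists c; rewrite // inE hy andbT inE.
apply: leq_trans (subset_leq_card cover) _.
apply: leq_trans (card_bigcup_leq _ _ _) _.
rewrite expnS mulnC; apply: leq_trans (sum_leq_card_mul (K := q) _) _.
  by move=> c /branch_level_exit [w]; apply: card_neighbours_setI.
exact: leq_mul IH (leqnn q).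
Qed.

Lemma card_branch_from lo n :
  lo <= n -> #|[set y in branch b a n | lo <= d a y]| + W lo <= W n.
Proof.
move=> lon; rewrite (geom_sum_cat q lon) addnC leq_add2l.
have cover : [set y in branch b a n | lo <= d a y] \subset
    \bigcup_(lo <= j < n) branch_level b a j.
  apply/subsetP => y; rewrite !inE => /andP [/andP [hn /eqP hb] hlo].
  by rewrite (big_rem (d a y)) ?mem_index_iota ?hlo //= !inE eqxx hb eqxx.
apply: leq_trans (subset_leq_card cover) _.
apply: leq_trans (card_bigcup_leq _ _ _) _.
by apply: leq_sum => j _; apply: card_branch_level.
Qed.

Lemma card_branch n : #|branch b a n| <= W n.
Proof.
apply: leq_trans (card_branch_from (leq0n n)); rewrite geom_sum0 addn0.
by apply: subset_leq_card; apply/subsetP => y; rewrite !inE => ->.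
Qed.

End Branch.

Lemma branch_succ_cover a b n y :
  y \in branch b a n.+1 -> y != a -> exists2 c, c \in N a :\ b & y \in branch a c n.
Proof.
rewrite inE => /andP [hn /eqP hby] ya; have [c hac hay] := dist_pred_neighbour ya.
exists c; last by rewrite inE hay eqxx andbT; lia.
by rewrite !inE hac andbT; apply: contra_eqN hby => /eqP <-; lia.
Qed.

Lemma ball_cover x n y :
  y \in ball n x -> y != x -> exists2 c, c \in N x & y \in branch x c n.
Proof.
rewrite inE => hn yx; have [c hxc hxy] := dist_pred_neighbour yx.
by exists c; rewrite ?inE // hxy eqxx andbT; lia.
Qed.

Lemma card_branch_setD_ball_near a c z t s n :
  e c a -> d a z = t -> s - t <= n ->
  #|branch a c n :\: ball s z| + W (s - t) <= W n.
Proof.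
move=> hca haz lo_n; apply: leq_trans (card_branch_from hca lo_n); rewrite leq_add2r.
apply: subset_leq_card; apply/subsetP => y.
rewrite !inE -ltnNge => /andP [hzy /andP [-> /eqP hay]]; rewrite hay eqxx /=.
by have := dist_triangle z a y; rewrite (dist_sym z a) haz hay; lia.
Qed.

(* Induction along a geodesic from a to z: the neighbour of a towards z
   carries the induction hypothesis, and in each of the other branches the
   first s - t - 1 levels lie inside the ball around z. *)
Lemma card_branch_setD_ball s t a b z n :
  e a b -> d a z = t -> d b z = t.+1 -> t + s < n ->
  #|branch b a n :\: ball s z| + W s.+1 + W s <= W n + W (s - t).
Proof.
elim: t a b z n => [|t IH] a b z n hab haz hbz htn.
  have /eqP zE : a == z by rewrite -dist_eq0 haz.
  rewrite -zE subn0 leq_add2r; apply: leq_trans (card_branch_from hab htn).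
  rewrite leq_add2r; apply: subset_leq_card; apply/subsetP => y.
  by rewrite !inE -ltnNge => /andP [-> /andP [-> ->]].
case: n htn => [|n] // htn.
have [c hac hcz] := dist_succ haz.
have hca : e c a by rewrite esym.
have IHc := IH c a z n hca hcz haz ltac:(lia).
have hcb : c \in N a :\ b by rewrite !inE hac andbT; apply: contra_eqN hbz => /eqP <-; lia.
set lo := s - t.+1.
have lo_n : lo <= n by lia.
have others : {in N a :\ b :\ c, forall c0, #|branch a c0 n :\: ball s z| <= W n - W lo}.
  move=> c0; rewrite !inE => /and3P [_ _ hac0].
  rewrite leq_subRL ?leq_geom_sum // addnC.
  by apply: card_branch_setD_ball_near haz lo_n; rewrite esym.
have apex : #|[set a] :\: ball s z| + W (s - t) <= 1 + q * W lo.
  case: (leqP s t) => hst.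
    rewrite (_ : s - t = 0) ?geom_sum0 ?addn0; last by lia.
    by rewrite -(cards1 a) (leq_trans (subset_leq_card (subsetDl _ _))) ?leq_addr.
  rewrite (_ : [set a] :\: ball s z = set0) ?cards0.
    by rewrite (_ : s - t = lo.+1) ?geom_sumSl; lia.
  by apply/setP => y; rewrite !inE andbC; case: eqP => //= ->; rewrite dist_sym haz hst.
have deg : #|N a :\ b :\ c| + 2 <= q.+1.
  have := cardsD1 b (N a); have := cardsD1 c (N a :\ b); have := deg_leq a.
  by rewrite hcb !inE hab; lia.
have := card_setD_cover (ball s z) (@branch_succ_cover a b n).
rewrite (big_setD1 c hcb) /=.
have := sum_leq_card_mul others; have := leq_geom_sum q lo_n.
have : #|N a :\ b :\ c| * (W n - W lo) <= (q - 1) * (W n - W lo) by apply: leq_mul; lia.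
rewrite (geom_sumSl q n); nia.
Qed.

Lemma card_ball_setD_ball s k x z : s < d x z -> d x z + s <= k ->
  #|ball k x :\: ball s z| + q.+1 * W s <= q.+1 * W k.
Proof.
move=> hs hk; have hxz : d x z = (d x z).-1.+1 by rewrite (ltn_predK hs).
have [c hxc hcz] := dist_succ hxz; have hcx : e c x by rewrite esym.
have geodesic := card_branch_setD_ball (s := s) (n := k) hcx hcz hxz ltac:(lia).
rewrite (_ : s - _ = 0) ?geom_sum0 ?addn0 in geodesic; last by lia.
have others : {in N x :\ c, forall c0, #|branch x c0 k :\: ball s z| <= W k}.
  move=> c0; rewrite !inE => /andP [_ hxc0].
  by apply: leq_trans (card_branch _ k); [apply/subset_leq_card/subsetDl|rewrite esym].
have hc : c \in N x by rewrite inE.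
have deg : #|N x :\ c| <= q by have := cardsD1 c (N x); have := deg_leq x; rewrite hc; lia.
have := card_setD_cover (ball s z) (@ball_cover x k).
rewrite (big_setD1 c hc) /=.
have : #|[set x] :\: ball s z| <= 1 by rewrite -(cards1 x) subset_leq_card ?subsetDl.
have := sum_leq_card_mul others; have := leq_mul deg (leqnn (W k)).
have := geom_sumSl q s; lia.
Qed.

End MooreBounds.

Section GreedyColouring.
Variables (T : finType) (r : rel T) (c : nat).
Hypothesis rsym : symmetric r.

Definition proper_on (g : T -> 'I_c) (U : {set T}) : Prop :=
  {in U &, forall x y, x != y -> r x y -> g x != g y}.

Lemma colorable_proper (g : T -> 'I_c) : proper_on g [set: T] -> colorable r c.
Proof.
move=> gP; apply/existsP; exists [ffun x => g x].
apply/forallP => x; apply/forallP => y; apply/implyP => /andP [xy rxy].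
by rewrite !ffunE gP ?inE.
Qed.

Lemma exists_free_colour (F : {set 'I_c}) : #|F| < c -> exists i, i \notin F.
Proof.
move=> Fc; have : 0 < #|~: F| by have := cardsC F; rewrite card_ord; lia.
by case/card_gt0P => i; rewrite inE; exists i.
Qed.

Lemma proper_on_setU1 (g : T -> 'I_c) U x i :
  proper_on g U -> i \notin g @: [set y in U | r x y] ->
  proper_on (fun y => if y == x then i else g y) (x |: U).
Proof.
move=> gP iF y z; rewrite !in_setU1.
have free w : w \in U -> r x w -> i != g w.
  by move=> wU rxw; apply: contraNneq iF => ->; apply: imset_f; rewrite inE wU.
case: (eqVneq y x) => [->|yx]; case: (eqVneq z x) => [->|zx] //= yU zU yz ryz.
- exact: free.
- by rewrite eq_sym free // rsym.
- exact: gP.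
Qed.

Lemma greedy_colorable (S0 : {set T}) (f0 : T -> 'I_c) (rank : T -> nat) :
  proper_on f0 S0 ->
  {in ~: S0, forall x, #|f0 @: [set y in S0 | r x y]| +
     #|[set y | [&& y \notin S0, y != x, r x y & rank x <= rank y]]| < c} ->
  colorable r c.
Proof.
move=> f0P room.
suff ext n : forall U : {set T}, #|U| <= n -> U \subset ~: S0 ->
    exists g : T -> 'I_c, {in S0, g =1 f0} /\ proper_on g (S0 :|: U).
  have [g [_ gP]] := ext _ (~: S0) (leqnn _) (subxx _).
  by apply: (colorable_proper (g := g)); rewrite -(setUCr S0).
elim: n => [|n IH] U hU US0.
  by exists f0; move: hU; rewrite leqn0 cards_eq0 => /eqP ->; rewrite setU0.
have [->|[x0 x0U]] := set_0Vmem U; first by apply: IH; rewrite ?cards0 ?sub0set.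
have [x xU xmin] : exists2 x, x \in U & {in U, forall y, rank x <= rank y}.
  by case: (arg_minnP rank x0U) => x; exists x.
have xS0 : x \notin S0 by move/subsetP: US0 => /(_ x xU); rewrite inE.
have Ux : #|U :\ x| <= n by have := cardsD1 x U; rewrite xU; lia.
have [g [gf0 gP]] := IH (U :\ x) Ux (subset_trans (subsetDl _ _) US0).
set F := g @: [set y in S0 :|: U :\ x | r x y].
have [i iF] : exists i, i \notin F.
  apply: exists_free_colour; apply: leq_ltn_trans (room x _); last by rewrite inE.
  set P2 := [set y | [&& y \notin S0, y != x, r x y & rank x <= rank y]].
  have FP : F \subset f0 @: [set y in S0 | r x y] :|: g @: P2.
    apply/subsetP => _ /imsetP [y + ->]; rewrite !inE => /andP [yS rxy].
    have [yS0|yS0] := boolP (y \in S0); first by rewrite gf0 // imset_f // inE yS0.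
    apply/orP; right; apply: imset_f; move: yS; rewrite !inE (negbTE yS0) /=.
    by case/andP=> yx yU; rewrite yx rxy xmin.
  apply: leq_trans (subset_leq_card FP) _; apply: leq_trans (leq_card_setU _ _) _.
  by rewrite leq_add2l leq_imset_card.
exists (fun y => if y == x then i else g y); split.
  by move=> y yS0; rewrite gf0 //; case: eqP yS0 xS0 => // -> ->.
rewrite -(setD1K xU) setUCA; apply: proper_on_setU1 => //.
Qed.

Lemma precolouring_two_sets (A B : {set T}) :
  0 < c -> maxn #|A| #|B| <= c -> {in A & B, forall a b, ~~ r a b} ->
  exists2 f0 : T -> 'I_c,
    proper_on f0 (A :|: B) & {in A :|: B, forall y, f0 y < maxn #|A| #|B|}.
Proof.
move=> c_gt0; rewrite geq_max => /andP [Ac Bc] farAB.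
pose code (X : {set T}) y : 'I_c := insubd (Ordinal c_gt0) (index y (enum X)).
have code_lt (X : {set T}) y : #|X| <= c -> y \in X -> code X y < #|X|.
  move=> Xc yX; have yXlt : index y (enum X) < #|X| by rewrite cardE index_mem mem_enum.
  by rewrite val_insubd (leq_trans yXlt Xc).
have code_inj (X : {set T}) : #|X| <= c -> {in X &, injective (code X)}.
  move=> Xc y z yX zX /(congr1 val); rewrite !val_insubd.
  rewrite !(leq_trans _ Xc) ?cardE ?index_mem ?mem_enum //.
  by apply: (index_inj y); rewrite mem_enum.
exists (fun y => if y \in A then code A y else code B y).
  move=> y z; rewrite !inE => yAB zAB yz ryz.
  case: (boolP (y \in A)) => yA; case: (boolP (z \in A)) => zA.
  - by apply: contra yz => /eqP /code_inj ->.
  - by move: zAB; rewrite (negbTE zA) /= => /(farAB y z yA); rewrite ryz.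
  - by move: yAB; rewrite (negbTE yA) /= => /(farAB z y zA); rewrite rsym ryz.
  - move: yAB zAB; rewrite (negbTE yA) (negbTE zA) /= => yB zB.
    by apply: contra yz => /eqP /code_inj ->.
move=> y; rewrite inE; case: (boolP (y \in A)) => [yA _|_ /= yB].
  by rewrite (leq_trans (code_lt _ _ Ac yA)) ?leq_maxl.
by rewrite (leq_trans (code_lt _ _ Bc yB)) ?leq_maxr.
Qed.

End GreedyColouring.


Section FarColouring.
Variables (T : finType) (e : rel T).
Hypothesis esym : symmetric e.
Hypothesis econn : forall x y, connect e x y.
Variable q : nat.
Hypothesis deg_leq : forall x, #|[set y | e x y]| <= q.+1.
Variables (k s : nat) (u v w : T).
Hypothesis ks : 6 * s + 3 <= k.
Hypothesis duv : dist e u v = k + 2 * s + 1.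
Hypothesis duw : dist e u w = 4 * s + 2.
Hypothesis dwv : dist e w v = k - 2 * s - 1.

Local Notation d := (dist e).
Local Notation W := (geom_sum q).
Local Notation A := (ball e s u).
Local Notation B := (ball e s v).
Local Notation S0 := (A :|: B).
Local Notation precoloured x := [set y in S0 | powrel e k x y].
Local Notation later x :=
  [set y | [&& y \notin S0, y != x, powrel e k x y & d w x <= d w y]].

Let dist_sym := dist_sym esym econn.
Let dist_triangle := dist_triangle econn.
Let dist_xx := dist_xx econn.

Lemma ends_far a b : a \in A -> b \in B -> k < d a b.
Proof.
rewrite !inE => ua vb.
have := dist_triangle u a v; have := dist_triangle a b v.
by rewrite (dist_sym b v); lia.
Qed.

Lemma card_ball_setD_ends x : d w x <= s ->
  #|ball e k x :\: (A :|: B)| + maxn #|A| #|B| + q.+1 * W s <= q.+1 * W k.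
Proof.
move=> wx.
have dxu : 3 * s + 2 <= d x u <= 5 * s + 2.
  have := dist_triangle u w x; have := dist_triangle u x w.
  by rewrite (dist_sym x w) (dist_sym x u); lia.
have dxv : k - 3 * s - 1 <= d x v <= k - s - 1.
  have := dist_triangle w x v; have := dist_triangle x w v.
  by rewrite (dist_sym x w); lia.
have ballA := card_ball_setD_ball esym econn deg_leq (s := s) (k := k) (x := x) (z := u)
  ltac:(lia) ltac:(lia).
have ballB := card_ball_setD_ball esym econn deg_leq (s := s) (k := k) (x := x) (z := v)
  ltac:(lia) ltac:(lia).
have BA : B \subset ball e k x :\: A.
  apply/subsetP => y; rewrite !inE -ltnNge => vy.
  have := dist_triangle x v y; have := dist_triangle u y v.
  by rewrite (dist_sym y v) => t1 t2; apply/andP; split; lia.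
have AB : A \subset ball e k x :\: B.
  apply/subsetP => y; rewrite !inE -ltnNge => uy.
  have := dist_triangle x u y; have := dist_triangle v y u.
  by rewrite (dist_sym y u) (dist_sym v u) => t1 t2; apply/andP; split; lia.
rewrite (card_setD_setU BA) in ballA; rewrite (card_setD_setU AB) setUC in ballB.
lia.
Qed.

Lemma exists_later_ball x : s < d w x ->
  exists z, [/\ s < d x z, d x z + s <= k &
    {in ball e s z, forall y, (y \notin A :|: B) && (d w y < d w x)}].
Proof.
rewrite dist_sym => sx.
set j := if d x w <= k + s then minn (d x w) (k - s) else s.+1.
have jxw : j <= d x w by rewrite /j; case: ifP; lia.
have [z [xz zw]] := dist_split esym econn jxw.
exists z; split; [by rewrite xz /j; case: ifP; lia..|] => y; rewrite inE => zy.
have := dist_triangle w z y; have := dist_triangle z y w.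
have := dist_triangle u y w; have := dist_triangle v y w.
have := dist_triangle w u y; have := dist_triangle w v y.
rewrite (dist_sym w z) (dist_sym y w) (dist_sym v w) (dist_sym w u) => t1 t2 t3 t4 t5 t6.
rewrite !inE negb_or -!ltnNge -andbA; move: zw; rewrite /j.
by case: (leqP (d x w) (k + s)) => hxw zw; apply/and3P; split; lia.
Qed.

Lemma room_near_w (c : nat) (f0 : T -> 'I_c) x :
  {in S0, forall y, f0 y < maxn #|A| #|B|} -> x \notin S0 -> d w x <= s ->
  #|f0 @: precoloured x| + #|later x| < q.+1 * W k - q.+1 * W s.
Proof.
move=> f0lt xS0 wx.
have colours : f0 @: precoloured x \subset [set i : 'I_c | i < maxn #|A| #|B|].
  apply/subsetP => _ /imsetP [y + ->]; rewrite inE => /andP [yS0 _].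
  by rewrite inE f0lt.
have laterS0 : later x \subset (ball e k x :\: S0) :\ x.
  apply/subsetP => y; rewrite !inE powrelE // => /and4P [-> yx /andP [_ ->] _].
  by rewrite yx.
have := card_ball_setD_ends wx; have := subset_leq_card laterS0.
have := cardsD1 x (ball e k x :\: S0); rewrite in_setD xS0 inE dist_xx /=.
have := leq_trans (subset_leq_card colours) (card_ord_lt _ _).
by move: #|_ @: _| => n; lia.
Qed.

Lemma room_far_from_w (c : nat) (f0 : T -> 'I_c) x :
  s < d w x -> #|f0 @: precoloured x| + #|later x| < q.+1 * W k - q.+1 * W s.
Proof.
move=> sx; have [z [xz zk zS0]] := exists_later_ball sx.
set Y := (ball e k x :\: ball e s z) :\ x.
have outz y : y \in S0 -> y \notin ball e s z.
  by move=> yS0; apply/negP => /zS0 /andP []; rewrite yS0.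
have laterz y : d w x <= d w y -> y \notin ball e s z.
  by move=> wy; apply/negP => /zS0 /andP [_]; rewrite ltnNge wy.
have precY : precoloured x \subset Y :&: S0.
  apply/subsetP => y; rewrite inE powrelE // => /and3P [yS0 xy xyk].
  by rewrite in_setI yS0 !in_setD1 in_setD (negbTE (outz y yS0)) inE xyk eq_sym xy.
have laterY : later x \subset Y :\: S0.
  apply/subsetP => y; rewrite inE powrelE // => /and4P [yS0 yx /andP [_ xyk] wy].
  by rewrite in_setD yS0 !in_setD1 in_setD (negbTE (laterz y wy)) inE xyk yx.
have := card_ball_setD_ball esym econn deg_leq xz zk.
have := cardsD1 x (ball e k x :\: ball e s z).
rewrite in_setD (negbTE (laterz x (leqnn _))) inE dist_xx /= -/Y.
have := cardsID S0 Y; have := subset_leq_card precY; have := subset_leq_card laterY.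
by have := leq_imset_card f0 (precoloured x); move: #|_ @: _| => n; lia.
Qed.

Lemma colorable_far : colorable (powrel e k) (q.+1 * W k - q.+1 * W s).
Proof.
have wS0 : w \in ball e k w :\: S0.
  by rewrite !inE dist_xx duw (dist_sym v w) dwv; lia.
have mx_lt : maxn #|A| #|B| < q.+1 * W k - q.+1 * W s.
  have := card_ball_setD_ends (x := w) ltac:(by rewrite dist_xx).
  have : 0 < #|ball e k w :\: S0| by apply/card_gt0P; exists w.
  by lia.
have far : {in A & B, forall a b, ~~ powrel e k a b}.
  by move=> a b aA bB; rewrite powrelE // leqNgt (ends_far aA bB) andbF.
have [f0 f0P f0lt] := precolouring_two_sets (powrel_sym esym econn k)
  (leq_ltn_trans (leq0n _) mx_lt) (ltnW mx_lt) far.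
apply: (greedy_colorable (powrel_sym esym econn k) f0P (rank := d w)) => x.
rewrite inE => xS0; case: (leqP (d w x) s) => [wx|sx].
  exact: room_near_w.
exact: room_far_from_w.
Qed.

End FarColouring.

Lemma colorable_pow_far_pair (T : finType) (e : rel T) q k s u v :
  symmetric e -> (forall x y, connect e x y) ->
  (forall x, #|[set y | e x y]| <= q.+1) ->
  6 * s + 3 <= k -> dist e u v = k + 2 * s + 1 ->
  colorable (powrel e k) (q.+1 * geom_sum q k - q.+1 * geom_sum q s).
Proof.
move=> esym econn deg_leq ks uv.
have [w [uw wv]] := dist_split esym econn (x := u) (y := v) (n := 4 * s + 2)
  ltac:(rewrite uv; lia).
by apply: (colorable_far esym econn deg_leq ks uv uw); rewrite wv uv; lia.
Qed.

Lemma chi_leq (T : finType) (r : rel T) c : colorable r c -> chi r <= c.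
Proof. by rewrite /chi; case: ex_minnP => n _; apply. Qed.

Lemma fmd_geom_sum m q : fmd m q.+1 = q.+1 * geom_sum q m.
Proof. by rewrite /fmd subn1. Qed.

Unset Implicit Arguments. Set Strict Implicit.

Theorem proposition3 (T : finType) (e : rel T) (k Delta s : nat) :
  symmetric e -> irreflexive e ->
  (forall x y : T, connect e x y) ->
  maxdeg e = Delta ->
  3 <= k -> 3 <= Delta ->
  12 * s + 5 <= k ->
  (kgap e k < (fmd s Delta + 1)%:Z)%R ->
  diameter e <= k + 2 * s.
Proof.
move=> esym _ econn maxdegE _ Delta3 ks gap.
have [q Dq] : exists q, Delta = q.+1 by exists Delta.-1; lia.
have deg_leq x : #|[set y | e x y]| <= q.+1.
  by rewrite -Dq -maxdegE (leq_bigmax (F := deg e) x).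
apply/bigmax_leqP => u _; apply/bigmax_leqP => v _; rewrite leqNgt; apply/negP => far.
have [v' [uv' _]] := dist_split esym econn (x := u) (y := v) (n := k + 2 * s + 1)
  ltac:(by rewrite addn1).
have ks' : 6 * s + 3 <= k by lia.
have := chi_leq (colorable_pow_far_pair esym econn deg_leq ks' uv').
have := leq_mul (leqnn q.+1) (@leq_geom_sum q s k ltac:(lia)).
move: gap; rewrite /kgap maxdegE Dq !fmd_geom_sum ltrBlDr -PoszD ltz_nat; lia.
Qed.
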